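(* For the symmetric walk, for the weakly asymmetric walk with any fixed $c>0$, and for the asymmetric walk with any fixed $q<p$, the following holds. If $X_0$ is chosen uniformly at random from $\mathcal T_N$, independently of the steps, then $R_N/N$ converges in distribution to the uniform distribution on $[0,1]$ as $N\to\infty$.
   Context: Fix $N\ge2$ and let $\mathcal T_N=\{0,1,\dots,N\}$. Let $(X_n)_{n\ge0}$ be a nearest-neighbour random walk on $\mathcal T_N$. At each step it moves from $x$ to $x+1$ with probability $p_N$ and to $x-1$ with probability $q_N=1-p_N$, independently of the past, and it is stopped the first time it is at $0$ or $N$. (If it starts at $0$ or $N$ it is stopped immediately; this has vanishing probability and does not affect the limit.) The walk is called: - symmetric if $p_N=q_N=1/2$; - weakly asymmetric (with parameter $c>0$ fixed) if $q_N=1/2-c/N$ and $p_N=1/2+c/N$, for $N$ large; - asymmetric if $p_N=p$ and $q_N=q$ are fixed with $p+q=1$ and $q<p$. For $a\in\mathcal T_N$ let $T_a=\inf\{n\ge1:X_n=a\}$ and $\tau_N=T_0\wedge T_N$. Let $G(y)=\sum_{k=0}^{\tau_N}\mathbf 1\{X_k=y\}$, and let the range be $R_N=\#\{y\in\mathcal T_N:G(y)\ge1\}$. *)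

From Stdlib Require Import Reals List ZArith.
Import ListNotations.
Open Scope R_scope.

(* All step sequences of length n (true = step +1, false = step -1). *)
Fixpoint bool_lists (n : nat) : list (list bool) :=
  match n with
  | O => [[]]
  | S n' => flat_map (fun s => [true :: s; false :: s]) (bool_lists n')
  end.

Fixpoint positions (x : Z) (s : list bool) : list Z :=
  x :: match s with
       | nil => nil
       | b :: s' => positions (if b then (x + 1)%Z else (x - 1)%Z) s'
       end.

Definition interiorb (N : nat) (y : Z) : bool :=
  (0 <? y)%Z && (y <? Z.of_nat N)%Z.

Definition boundaryb (N : nat) (y : Z) : bool :=
  (y =? 0)%Z || (y =? Z.of_nat N)%Z.

(* s is a stopped path from x: the walk is in {1..N-1} at all times before the
   last one and at 0 or N at the last time (time tau_N = length s).
   A start at 0 or N gives the empty path (stopped immediately). *)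
Definition stoppedb (N : nat) (x : Z) (s : list bool) : bool :=
  let ps : list Z := positions x s in
  boundaryb N (last ps x) && forallb (interiorb N) (removelast ps).

Definition path_weight (pN : R) (s : list bool) : R :=
  fold_right (fun (b : bool) (acc : R) => (if b then pN else 1 - pN) * acc) 1 s.

Definition visits (y : Z) (ps : list Z) : bool := existsb (Z.eqb y) ps.

Definition range (N : nat) (x : Z) (s : list bool) : nat :=
  length (filter (fun y => visits (Z.of_nat y) (positions x s)) (seq 0 (N + 1))).

Definition rsum (l : list R) : R := fold_right Rplus 0 l.

(* Contribution of paths stopped at exactly time n to
   P(R_N / N <= t), with X_0 uniform on {0..N}. *)
Definition cdf_term (p : nat -> R) (N : nat) (t : R) (n : nat) : R :=
  rsum (map (fun x : nat =>
    / INR (N + 1) *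
    rsum (map (fun s =>
      (if stoppedb N (Z.of_nat x) s then path_weight (p N) s else 0) *
      (if Rle_dec (INR (range N (Z.of_nat x) s) / INR N) t then 1 else 0))
      (bool_lists n)))
    (seq 0 (N + 1))).

Definition uniform_cdf (t : R) : R := Rmax 0 (Rmin t 1).

Definition symmetric_regime (p : nat -> R) : Prop :=
  forall N, p N = / 2.

Definition weakly_asymmetric_regime (p : nat -> R) : Prop :=
  exists c : R, 0 < c /\
    exists N0 : nat, forall N : nat, (N0 <= N)%nat -> p N = / 2 + c / INR N.

Definition asymmetric_regime (p : nat -> R) : Prop :=
  exists p0 : R, / 2 < p0 <= 1 /\ forall N, p N = p0.

(* Fix a step sequence s and 1 <= k <= N.  A walk stopped on leaving (0, N) that exits at 0 with
   range at most k never reaches k, so it is exactly a walk stopped on leaving (0, k) exiting at 0;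
   one exiting at N with range at most k stays above N - k, and translated by k - N it is exactly a
   walk stopped on leaving (0, k) exiting at k.  Summing over s, with X_0 uniform on {0, ..., N},
     P(R_N <= k) = 1/(N+1) * sum_{y <= k} P_y(the walk on {0, ..., k} is absorbed) = (k+1)/(N+1),
   since absorption is almost sure: for p >= 1/2, which holds eventually in all three regimes,
   the expected absorption time from y is at most k^2 - y^2.  With k = floor(t N) this gives
   P(R_N / N <= t) = (floor(t N) + 1)/(N + 1) -> t for 0 < t < 1. *)

From Stdlib Require Import Reals List ZArith Lra Lia Bool.
Import ListNotations.
Open Scope Z_scope.

Definition step (b : bool) (x : Z) : Z := if b then x + 1 else x - 1.

Fixpoint endpoint (x : Z) (s : list bool) : Z :=
  match s with [] => x | b :: s' => endpoint (step b x) s' end.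

Fixpoint absorbed (a b x : Z) (s : list bool) : bool :=
  match s with
  | [] => (x =? a) || (x =? b)
  | c :: s' => (a <? x) && (x <? b) && absorbed a b (step c x) s'
  end.

Fixpoint survives (a b x : Z) (s : list bool) : bool :=
  (a <? x) && (x <? b) &&
  match s with [] => true | c :: s' => survives a b (step c x) s' end.

Lemma positions_cons x c s : positions x (c :: s) = x :: positions (step c x) s.
Proof. reflexivity. Qed.

Lemma in_positions_start x s : In x (positions x s).
Proof. destruct s; left; reflexivity. Qed.

Lemma in_positions_endpoint x s : In (endpoint x s) (positions x s).
Proof. revert x; induction s as [|c s IH]; intros x; simpl; auto. Qed.

Lemma stoppedb_absorbed N x s : stoppedb N x s = absorbed 0 (Z.of_nat N) x s.
Proof.
  revert x; induction s as [|c s IH]; intros x.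
  - unfold stoppedb, boundaryb; simpl. now rewrite andb_true_r.
  - cbn [absorbed]. rewrite <- IH. unfold stoppedb. rewrite positions_cons.
    destruct (positions (step c x) s) as [|y r] eqn:E; [destruct s; discriminate|].
    assert (Hlast : forall d d', last (y :: r) d = last (y :: r) d').
    { clear. revert y; induction r as [|z r IH]; intros y d d'; [reflexivity|apply IH]. }
    change (last (x :: y :: r) x) with (last (y :: r) x).
    change (removelast (x :: y :: r)) with (x :: removelast (y :: r)).
    rewrite (Hlast x (step c x)). fold (interiorb N x). simpl forallb.
    destruct (interiorb N x), (boundaryb N _); reflexivity.
Qed.

Lemma absorbed_endpoint a b x s :
  absorbed a b x s = true -> endpoint x s = a \/ endpoint x s = b.
Proof.
  revert x; induction s as [|c s IH]; intros x H; simpl in *.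
  - apply orb_true_iff in H as [H|H]; apply Z.eqb_eq in H; auto.
  - apply andb_true_iff in H as [_ H]; auto.
Qed.

Lemma absorbed_positions a b x s : absorbed a b x s = true ->
  forall z, In z (positions x s) -> z = endpoint x s \/ a < z < b.
Proof.
  revert x; induction s as [|c s IH]; intros x H z Hz; simpl in H.
  - destruct Hz as [<-|[]]; auto.
  - apply andb_true_iff in H as [H Hs]; apply andb_true_iff in H as [Ha Hb].
    apply Z.ltb_lt in Ha, Hb. destruct Hz as [<-|Hz]; auto.
    exact (IH _ Hs z Hz).
Qed.

Lemma absorbed_bounds a b x s : a <= b -> absorbed a b x s = true ->
  forall z, In z (positions x s) -> a <= z <= b.
Proof.
  intros Hab H z Hz.
  destruct (absorbed_positions _ _ _ _ H z Hz); [destruct (absorbed_endpoint _ _ _ _ H)|]; lia.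
Qed.

Lemma absorbed_start a b x s : a <= b -> absorbed a b x s = true -> a <= x <= b.
Proof. intros Hab H. exact (absorbed_bounds _ _ _ _ Hab H x (in_positions_start x s)). Qed.

Lemma absorbed_not_bottom a b x s : a < b -> absorbed a b x s = true ->
  negb (endpoint x s =? a) = (endpoint x s =? b).
Proof.
  intros Hab H. destruct (absorbed_endpoint _ _ _ _ H) as [-> | ->];
    destruct (Z.eqb_spec a b), (Z.eqb_spec b a), (Z.eqb_spec a a), (Z.eqb_spec b b);
    simpl; reflexivity || lia.
Qed.

Lemma absorbed_transfer a b a' b' x s : absorbed a b x s = true ->
  (forall z, In z (positions x s) -> z <> endpoint x s -> a' < z < b') ->
  endpoint x s = a' \/ endpoint x s = b' -> absorbed a' b' x s = true.
Proof.
  revert x; induction s as [|c s IH]; intros x H Hin He; cbn [absorbed endpoint] in *.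
  - destruct He as [->| ->]; rewrite Z.eqb_refl; [|rewrite orb_true_r]; reflexivity.
  - apply andb_true_iff in H as [H Hs]; apply andb_true_iff in H as [Ha Hb].
    apply Z.ltb_lt in Ha, Hb.
    assert (Hx : a' < x < b').
    { apply Hin; [now left|]. intros Ex.
      destruct (absorbed_endpoint _ _ _ _ Hs); lia. }
    rewrite (proj2 (Z.ltb_lt a' x)), (proj2 (Z.ltb_lt x b')) by lia.
    apply IH; [exact Hs | | exact He]. intros z Hz; apply Hin; now right.
Qed.

Lemma endpoint_shift x d s : endpoint (x + d) s = endpoint x s + d.
Proof.
  revert x; induction s as [|c s IH]; intros x; simpl; auto.
  rewrite <- IH. f_equal. destruct c; simpl; lia.
Qed.

Lemma absorbed_shift a b x d s : absorbed (a + d) (b + d) (x + d) s = absorbed a b x s.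
Proof.
  revert x; induction s as [|c s IH]; intros x; cbn [absorbed].
  - destruct (Z.eqb_spec x a), (Z.eqb_spec x b), (Z.eqb_spec (x + d) (a + d)),
      (Z.eqb_spec (x + d) (b + d)); simpl; auto; lia.
  - replace (step c (x + d)) with (step c x + d) by (destruct c; simpl; lia).
    rewrite IH. destruct (Z.ltb_spec a x), (Z.ltb_spec x b), (Z.ltb_spec (a + d) (x + d)),
      (Z.ltb_spec (x + d) (b + d)); simpl; auto; lia.
Qed.

Lemma positions_between_start x s z y : In z (positions x s) ->
  x <= y <= z \/ z <= y <= x -> In y (positions x s).
Proof.
  revert x; induction s as [|c s IH]; intros x Hz Hy.
  - destruct Hz as [<-|[]]. left; lia.
  - rewrite positions_cons in *. destruct Hz as [<-|Hz]; [left; lia|].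
    destruct (Z.eq_dec y x) as [->|Hne]; [now left|right].
    apply (IH _ Hz). destruct c; simpl; lia.
Qed.

Lemma positions_between x s z w y : In z (positions x s) -> In w (positions x s) ->
  z <= y <= w -> In y (positions x s).
Proof.
  intros Hz Hw Hy. destruct (Z.le_gt_cases y x).
  - apply (positions_between_start x s z); auto; lia.
  - apply (positions_between_start x s w); auto; lia.
Qed.

Lemma length_filter_seq_le (f : nat -> bool) n lo hi :
  (forall y, f y = true -> lo <= y <= hi)%nat ->
  (length (filter f (seq 0 n)) <= hi + 1 - lo)%nat.
Proof.
  intros Hf. enough (length (filter f (seq 0 n)) <= Nat.min n (hi + 1) - lo)%nat by lia.
  induction n as [|n IH]; [simpl; lia|].
  rewrite seq_S, filter_app, length_app, Nat.add_0_l. cbn [filter].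
  destruct (f n) eqn:E; cbn [length]; [specialize (Hf _ E)|]; lia.
Qed.

Lemma length_filter_seq_ge (f : nat -> bool) n lo hi :
  (forall y, lo <= y <= hi -> f y = true)%nat -> (hi < n)%nat ->
  (hi + 1 - lo <= length (filter f (seq 0 n)))%nat.
Proof.
  intros Hf Hn. enough (Nat.min n (hi + 1) - lo <= length (filter f (seq 0 n)))%nat by lia.
  clear Hn. induction n as [|n IH]; [simpl; lia|].
  rewrite seq_S, filter_app, length_app, Nat.add_0_l. cbn [filter].
  destruct (f n) eqn:E; cbn [length]; [lia|].
  assert (~ (lo <= n <= hi)%nat) by (intros H; rewrite Hf in E; congruence). lia.
Qed.

Lemma length_filter_split {A} (f g : A -> bool) l :
  length (filter f l) =
  (length (filter (fun x => f x && g x) l) + length (filter (fun x => f x && negb (g x)) l))%nat.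
Proof. induction l as [|a l IH]; simpl; [reflexivity|]. destruct (f a), (g a); simpl; lia. Qed.

Lemma seq_offset m n : seq m n = map (fun y => (y + m)%nat) (seq 0 n).
Proof.
  revert m; induction n as [|n IH]; intros m; [reflexivity|].
  simpl. f_equal. rewrite IH, <- seq_shift, map_map. apply map_ext; intros; lia.
Qed.

Lemma length_filter_seq_window (f : nat -> bool) m n M :
  (forall x, f x = true -> m <= x < m + n)%nat -> (m + n <= M)%nat ->
  length (filter f (seq 0 M)) = length (filter (fun y => f (y + m)%nat) (seq 0 n)).
Proof.
  intros Hf HM. replace M with (m + (n + (M - m - n)))%nat by lia.
  rewrite !seq_app, !filter_app, !length_app, (seq_offset (0 + m) n), filter_map_swap, length_map.
  assert (Hout : forall l, (forall x, In x l -> ~ (m <= x < m + n)%nat) -> filter f l = []).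
  { intros l Hl. rewrite (filter_ext_in f (fun _ => false)); [apply filter_false|].
    intros x Hx. destruct (f x) eqn:E; [|reflexivity]. exfalso; exact (Hl x Hx (Hf x E)). }
  rewrite !Hout; [simpl; lia| |];
    intros x Hx; apply in_seq in Hx; lia.
Qed.

Lemma visits_In y ps : visits y ps = true <-> In y ps.
Proof.
  unfold visits. rewrite existsb_exists. split.
  - intros [z [Hz E]]. apply Z.eqb_eq in E; now subst.
  - intros H; exists y; split; auto; apply Z.eqb_refl.
Qed.

Lemma range_le N x s lo hi :
  (forall z, In z (positions x s) -> Z.of_nat lo <= z <= Z.of_nat hi) ->
  (range N x s <= hi + 1 - lo)%nat.
Proof.
  intros H. apply length_filter_seq_le. intros y Hy.
  apply visits_In, H in Hy. lia.
Qed.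

Lemma range_ge N x s lo hi : (hi <= N)%nat ->
  (forall y, Z.of_nat lo <= y <= Z.of_nat hi -> In y (positions x s)) ->
  (hi + 1 - lo <= range N x s)%nat.
Proof.
  intros HN H. apply length_filter_seq_ge; [|lia]. intros y Hy.
  apply visits_In, H. lia.
Qed.

Lemma range_pos N x s : (x <= N)%nat -> (1 <= range N (Z.of_nat x) s)%nat.
Proof.
  intros Hx. enough (x + 1 - x <= range N (Z.of_nat x) s)%nat by lia.
  apply range_ge; [exact Hx|]. intros y Hy.
  replace y with (Z.of_nat x) by lia. apply in_positions_start.
Qed.

Lemma absorbed_range_le N x s : (1 <= N)%nat -> absorbed 0 (Z.of_nat N) x s = true ->
  (range N x s <= N)%nat.
Proof.
  intros HN H. destruct (absorbed_endpoint _ _ _ _ H) as [He|He].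
  - enough (range N x s <= (N - 1) + 1 - 0)%nat by lia.
    apply range_le. intros z Hz. destruct (absorbed_positions _ _ _ _ H z Hz); lia.
  - enough (range N x s <= N + 1 - 1)%nat by lia.
    apply range_le. intros z Hz. destruct (absorbed_positions _ _ _ _ H z Hz); lia.
Qed.

Section RangeOfPath.
Variables (N k : nat) (x : Z) (s : list bool).
Hypothesis (Hk : (k <= N)%nat).
Hypothesis (Hbounds : forall z, In z (positions x s) -> 0 <= z <= Z.of_nat N).

Lemma range_le_iff_visits_top : In (Z.of_nat N) (positions x s) ->
  (range N x s <= k)%nat <-> forall z, In z (positions x s) -> Z.of_nat (N - k) < z.
Proof.
  intros HN; split.
  - intros Hr z Hz. destruct (Z.lt_ge_cases (Z.of_nat (N - k)) z) as [|Hge]; auto.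
    exfalso. assert (Hz' := Hbounds _ Hz).
    assert (Hge' := range_ge N x s (Z.to_nat z) N (le_n N)
      (fun y Hy => positions_between x s z _ y Hz HN ltac:(lia))). lia.
  - intros H. enough (range N x s <= N + 1 - (N - k + 1))%nat by lia.
    apply range_le. intros z Hz. specialize (H _ Hz). specialize (Hbounds _ Hz). lia.
Qed.

Lemma range_le_iff_visits_bottom : In 0 (positions x s) ->
  (range N x s <= k)%nat <-> forall z, In z (positions x s) -> z < Z.of_nat k.
Proof.
  intros H0; split.
  - intros Hr z Hz. destruct (Z.lt_ge_cases z (Z.of_nat k)) as [|Hge]; auto.
    exfalso. assert (Hz' := Hbounds _ Hz).
    assert (Hge' := range_ge N x s 0 (Z.to_nat z) ltac:(lia)
      (fun y Hy => positions_between x s 0 z y H0 Hz ltac:(lia))). lia.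
  - intros H. destruct k as [|k'].
    + specialize (H _ H0). lia.
    + enough (range N x s <= k' + 1 - 0)%nat by lia.
      apply range_le. intros z Hz. specialize (H _ Hz). specialize (Hbounds _ Hz). lia.
Qed.

End RangeOfPath.

Section ExitSide.
Variables (N k : nat) (s : list bool).
Hypothesis (Hk : (1 <= k <= N)%nat).

Lemma absorbed_top_range_le x :
  (absorbed 0 (Z.of_nat N) x s && (range N x s <=? k)%nat && (endpoint x s =? Z.of_nat N))%bool
  = (absorbed (Z.of_nat (N - k)) (Z.of_nat N) x s && (endpoint x s =? Z.of_nat N))%bool.
Proof.
  apply eq_true_iff_eq. rewrite !andb_true_iff, Nat.leb_le, Z.eqb_eq. split.
  - intros [[H Hr] He]. split; [|exact He].
    assert (Hb := absorbed_bounds _ _ _ _ (Nat2Z.is_nonneg N) H).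
    assert (HN : In (Z.of_nat N) (positions x s)) by (rewrite <- He; apply in_positions_endpoint).
    rewrite (range_le_iff_visits_top N k x s ltac:(lia) Hb HN) in Hr.
    eapply absorbed_transfer; [exact H| |now right].
    intros z Hz Hne. specialize (Hr _ Hz).
    destruct (absorbed_positions _ _ _ _ H z Hz); lia.
  - intros [H He]. split; [split|exact He].
    + eapply absorbed_transfer; [exact H| |now right].
      intros z Hz Hne. destruct (absorbed_positions _ _ _ _ H z Hz); lia.
    + assert (Hb := absorbed_bounds (Z.of_nat (N - k)) (Z.of_nat N) x s ltac:(lia) H).
      assert (HN : In (Z.of_nat N) (positions x s)) by (rewrite <- He; apply in_positions_endpoint).
      apply (range_le_iff_visits_top N k x s ltac:(lia)); [intros z Hz; specialize (Hb _ Hz); lia|exact HN|].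
      intros z Hz. destruct (absorbed_positions _ _ _ _ H z Hz); lia.
Qed.

Lemma absorbed_bottom_range_le x :
  (absorbed 0 (Z.of_nat N) x s && (range N x s <=? k)%nat && (endpoint x s =? 0))%bool
  = (absorbed 0 (Z.of_nat k) x s && (endpoint x s =? 0))%bool.
Proof.
  apply eq_true_iff_eq. rewrite !andb_true_iff, Nat.leb_le, Z.eqb_eq. split.
  - intros [[H Hr] He]. split; [|exact He].
    assert (Hb := absorbed_bounds _ _ _ _ (Nat2Z.is_nonneg N) H).
    assert (H0 : In 0 (positions x s)) by (rewrite <- He; apply in_positions_endpoint).
    rewrite (range_le_iff_visits_bottom N k x s ltac:(lia) Hb H0) in Hr.
    eapply absorbed_transfer; [exact H| |now left].
    intros z Hz Hne. specialize (Hr _ Hz).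
    destruct (absorbed_positions _ _ _ _ H z Hz); lia.
  - intros [H He]. split; [split|exact He].
    + eapply absorbed_transfer; [exact H| |now left].
      intros z Hz Hne. destruct (absorbed_positions _ _ _ _ H z Hz); lia.
    + assert (Hb := absorbed_bounds _ _ _ _ (Nat2Z.is_nonneg k) H).
      assert (H0 : In 0 (positions x s)) by (rewrite <- He; apply in_positions_endpoint).
      apply (range_le_iff_visits_bottom N k x s ltac:(lia)); [intros z Hz; specialize (Hb _ Hz); lia|exact H0|].
      intros z Hz. destruct (absorbed_positions _ _ _ _ H z Hz); lia.
Qed.

End ExitSide.

Lemma count_range_le N k s : (1 <= k <= N)%nat ->
  length (filter (fun x => absorbed 0 (Z.of_nat N) (Z.of_nat x) s
                           && (range N (Z.of_nat x) s <=? k)%nat) (seq 0 (N + 1)))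
  = length (filter (fun y => absorbed 0 (Z.of_nat k) (Z.of_nat y) s) (seq 0 (k + 1))).
Proof.
  intros Hk.
  rewrite (length_filter_split _ (fun x => endpoint (Z.of_nat x) s =? 0) (seq 0 (N + 1))),
    (length_filter_split _ (fun x => endpoint (Z.of_nat x) s =? 0) (seq 0 (k + 1))).
  f_equal.
  - rewrite (filter_ext _ (fun x => absorbed 0 (Z.of_nat k) (Z.of_nat x) s
                                    && (endpoint (Z.of_nat x) s =? 0)))
      by (intros x; apply absorbed_bottom_range_le; lia).
    rewrite (length_filter_seq_window _ 0 (k + 1)); [|intros x Hx|lia].
    + f_equal. apply filter_ext; intros y. now rewrite Nat.add_0_r.
    + apply andb_true_iff in Hx as [Hx _].
      apply absorbed_start in Hx; lia.
  - rewrite (filter_ext _ (fun x => absorbed (Z.of_nat (N - k)) (Z.of_nat N) (Z.of_nat x) s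
                                    && (endpoint (Z.of_nat x) s =? Z.of_nat N))).
    2:{ intros x. rewrite <- absorbed_top_range_le by lia.
        destruct (absorbed 0 (Z.of_nat N) (Z.of_nat x) s) eqn:E; [|reflexivity].
        rewrite absorbed_not_bottom with (b := Z.of_nat N) by (auto; lia). reflexivity. }
    rewrite (length_filter_seq_window _ (N - k) (k + 1)); [|intros x Hx|lia].
    + f_equal. apply filter_ext; intros y.
      rewrite Nat2Z.inj_add, endpoint_shift, <- (absorbed_shift 0 (Z.of_nat k) _ (Z.of_nat (N - k))).
      replace (0 + Z.of_nat (N - k)) with (Z.of_nat (N - k)) by lia.
      replace (Z.of_nat k + Z.of_nat (N - k)) with (Z.of_nat N) by lia.
      destruct (absorbed _ _ _ s) eqn:E; [simpl|reflexivity].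
      apply absorbed_endpoint in E. rewrite endpoint_shift in E.
      apply eq_true_iff_eq. rewrite negb_true_iff, Z.eqb_eq, Z.eqb_neq. lia.
    + apply andb_true_iff in Hx as [Hx _].
      apply absorbed_start in Hx; lia.
Qed.

Open Scope R_scope.

Lemma rsum_map_plus {A} (f g : A -> R) l :
  rsum (map (fun x => f x + g x) l) = rsum (map f l) + rsum (map g l).
Proof. induction l; simpl; [ring|rewrite IHl; ring]. Qed.

Lemma rsum_map_scal {A} c (f : A -> R) l :
  rsum (map (fun x => c * f x) l) = c * rsum (map f l).
Proof. induction l; simpl; [ring|rewrite IHl; ring]. Qed.

Lemma rsum_map_ext_in {A} (f g : A -> R) l : (forall x, In x l -> f x = g x) ->
  rsum (map f l) = rsum (map g l).
Proof. intros H; now rewrite (map_ext_in f g l H). Qed.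

Lemma rsum_map_zero {A} (f : A -> R) l : (forall x, In x l -> f x = 0) -> rsum (map f l) = 0.
Proof.
  intros H; induction l as [|a l IH]; simpl; [reflexivity|].
  rewrite H, IH; [ring| |now left]. intros x Hx; apply H; now right.
Qed.

Lemma rsum_map_const {A} c l : rsum (map (fun _ : A => c) l) = c * INR (length l).
Proof. induction l; simpl length; [simpl; ring|rewrite S_INR; simpl; rewrite IHl; ring]. Qed.

Lemma rsum_nonneg {A} (f : A -> R) l : (forall x, 0 <= f x) -> 0 <= rsum (map f l).
Proof. intros H; induction l; simpl; [lra|specialize (H a); lra]. Qed.

Lemma rsum_swap {A B} (f : A -> B -> R) l1 l2 :
  rsum (map (fun x => rsum (map (f x) l2)) l1) =
  rsum (map (fun y => rsum (map (fun x => f x y) l1)) l2).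
Proof.
  induction l1 as [|a l1 IH]; simpl.
  - now rewrite rsum_map_zero.
  - rewrite IH, <- rsum_map_plus. reflexivity.
Qed.

Lemma rsum_indicator {A} (P : A -> bool) c l :
  rsum (map (fun x => if P x then c else 0) l) = c * INR (length (filter P l)).
Proof.
  induction l as [|a l IH]; simpl; [ring|].
  rewrite IH. destruct (P a); simpl length; [rewrite S_INR|]; ring.
Qed.

Lemma rsum_bool_lists_S (f : list bool -> R) n :
  rsum (map f (bool_lists (S n))) =
  rsum (map (fun s => f (true :: s) + f (false :: s)) (bool_lists n)).
Proof.
  simpl. induction (bool_lists n) as [|s l IH]; simpl; [reflexivity|].
  rewrite IH; ring.
Qed.

Lemma path_weight_nonneg p s : 0 <= p <= 1 -> 0 <= path_weight p s.
Proof.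
  intros Hp. induction s as [|b s IH]; simpl; [lra|].
  apply Rmult_le_pos; [destruct b|]; lra.
Qed.

Lemma Un_cv_of_dist_le (u : nat -> R) l C :
  (forall n, Rabs (u n - l) <= C / INR (S n)) -> Un_cv u l.
Proof.
  intros Hu eps Heps.
  destruct (archimed (C / eps)) as [Hup _].
  exists (Z.to_nat (up (C / eps))). intros n Hn.
  assert (Hn' : C / eps < INR (S n)).
  { rewrite S_INR. destruct (Z_lt_le_dec (up (C / eps)) 0) as [Hneg|Hnn].
    - apply IZR_lt in Hneg. assert (0 <= INR n) by apply pos_INR. lra.
    - apply le_INR in Hn. rewrite INR_IZR_INZ, Z2Nat.id in Hn by exact Hnn. lra. }
  assert (HS : 0 < INR (S n)) by apply lt_0_INR, Nat.lt_0_succ.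
  apply (Rle_lt_trans _ _ _ (Hu n)).
  apply (Rmult_lt_reg_r (INR (S n))); [exact HS|].
  unfold Rdiv. rewrite Rmult_assoc, Rinv_l, Rmult_1_r by lra.
  apply (Rmult_lt_reg_r (/ eps)); [apply Rinv_0_lt_compat; lra|].
  replace (eps * INR (S n) * / eps) with (INR (S n)) by (field; lra). exact Hn'.
Qed.

Lemma Un_cv_const c : Un_cv (fun _ => c) c.
Proof. intros eps Heps. exists 0%nat. intros. unfold R_dist. now rewrite Rminus_diag, Rabs_R0. Qed.

Lemma infinite_sum_ext f g a : (forall n, f n = g n) -> infinite_sum f a -> infinite_sum g a.
Proof.
  intros H. apply Un_cv_ext. intros n. apply sum_eq. intros i _. apply H.
Qed.

Lemma infinite_sum_zero : infinite_sum (fun _ => 0) 0.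
Proof.
  apply (Un_cv_ext (fun _ => 0)); [|apply Un_cv_const].
  intros n. rewrite sum_cte. ring.
Qed.

Lemma infinite_sum_scal c f a : infinite_sum f a -> infinite_sum (fun n => c * f n) (c * a).
Proof.
  intros Hf. apply (Un_cv_ext (fun M => c * sum_f_R0 f M)).
  - intros M. rewrite scal_sum. apply sum_eq. intros; ring.
  - apply CV_mult; [apply Un_cv_const|exact Hf].
Qed.

Lemma infinite_sum_rsum {A} (f : A -> nat -> R) (a : A -> R) L :
  (forall y, In y L -> infinite_sum (f y) (a y)) ->
  infinite_sum (fun n => rsum (map (fun y => f y n) L)) (rsum (map a L)).
Proof.
  induction L as [|y L IH]; intros H; simpl.
  - exact infinite_sum_zero.
  - apply (Un_cv_ext (fun M => sum_f_R0 (f y) M + sum_f_R0 (fun n => rsum (map (fun y => f y n) L)) M)).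
    + intros M. rewrite <- sum_plus. reflexivity.
    + apply CV_plus; [apply H; now left|apply IH; intros; apply H; now right].
Qed.

Definition absorption_prob (p : R) (K : nat) (n : nat) (y : Z) : R :=
  rsum (map (fun s => if absorbed 0 (Z.of_nat K) y s then path_weight p s else 0) (bool_lists n)).

Definition survival_prob (p : R) (K : nat) (n : nat) (y : Z) : R :=
  rsum (map (fun s => if survives 0 (Z.of_nat K) y s then path_weight p s else 0) (bool_lists n)).

Lemma absorption_prob_0 p K y : absorption_prob p K 0 y = if boundaryb K y then 1 else 0.
Proof. unfold absorption_prob, boundaryb; simpl. destruct (_ || _)%bool; ring. Qed.

Lemma survival_prob_0 p K y : survival_prob p K 0 y = if interiorb K y then 1 else 0.
Proof. unfold survival_prob, interiorb; simpl. rewrite andb_true_r. destruct (_ && _)%bool; ring. Qed.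

Lemma absorption_prob_S p K n y : absorption_prob p K (S n) y =
  if interiorb K y
  then p * absorption_prob p K n (y + 1) + (1 - p) * absorption_prob p K n (y - 1) else 0.
Proof.
  unfold absorption_prob. rewrite rsum_bool_lists_S. cbn [absorbed step].
  fold (interiorb K y). destruct (interiorb K y); simpl.
  - rewrite <- !rsum_map_scal, <- rsum_map_plus. apply rsum_map_ext_in; intros s _.
    destruct (absorbed 0 _ (y + 1) s), (absorbed 0 _ (y - 1) s); simpl; ring.
  - apply rsum_map_zero; intros; ring.
Qed.

Lemma survival_prob_S p K n y : survival_prob p K (S n) y =
  if interiorb K y
  then p * survival_prob p K n (y + 1) + (1 - p) * survival_prob p K n (y - 1) else 0.
Proof.
  unfold survival_prob. rewrite rsum_bool_lists_S. cbn [survives step].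
  fold (interiorb K y). destruct (interiorb K y); simpl.
  - rewrite <- !rsum_map_scal, <- rsum_map_plus. apply rsum_map_ext_in; intros s _.
    destruct (survives 0 _ (y + 1) s), (survives 0 _ (y - 1) s); simpl; ring.
  - apply rsum_map_zero; intros; ring.
Qed.

Lemma sum_f_R0_recursion (f g h : nat -> R) (b : bool) a c M :
  (forall i, f (S i) = if b then a * g i + c * h i else 0) ->
  sum_f_R0 f (S M) = f 0%nat + (if b then a * sum_f_R0 g M + c * sum_f_R0 h M else 0).
Proof.
  intros Hf. induction M as [|M IH].
  - simpl. rewrite Hf. destruct b; ring.
  - rewrite tech5, IH, Hf. destruct b; simpl; ring.
Qed.

Section Absorption.
Variables (p : R) (K : nat).
Hypothesis Hp : / 2 <= p <= 1.

Lemma absorption_prob_nonneg n y : 0 <= absorption_prob p K n y.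
Proof.
  apply rsum_nonneg; intros s. destruct (absorbed _ _ _ _); [apply path_weight_nonneg; lra|lra].
Qed.

Lemma absorption_survival_sum M : forall y, (0 <= y <= Z.of_nat K)%Z ->
  sum_f_R0 (fun i => absorption_prob p K i y) M + survival_prob p K M y = 1.
Proof.
  induction M as [|M IH]; intros y Hy.
  - simpl. rewrite absorption_prob_0, survival_prob_0. unfold interiorb, boundaryb.
    destruct (Z.eqb_spec y 0), (Z.eqb_spec y (Z.of_nat K)), (Z.ltb_spec 0 y),
      (Z.ltb_spec y (Z.of_nat K)); simpl; lra || lia.
  - rewrite (sum_f_R0_recursion _ (fun i => absorption_prob p K i (y + 1))
      (fun i => absorption_prob p K i (y - 1)) (interiorb K y) p (1 - p))
      by (intros; apply absorption_prob_S).
    rewrite survival_prob_S, absorption_prob_0. unfold interiorb, boundaryb.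
    destruct (Z.ltb_spec 0 y), (Z.ltb_spec y (Z.of_nat K)); simpl;
      destruct (Z.eqb_spec y 0), (Z.eqb_spec y (Z.of_nat K)); simpl; try lia; try lra.
    assert (Hup := f_equal (Rmult p) (IH (y + 1)%Z ltac:(lia))).
    assert (Hdown := f_equal (Rmult (1 - p)) (IH (y - 1)%Z ltac:(lia))).
    lra.
Qed.

(* [K^2 - y^2] is a Lyapunov function: one step of an upward-biased walk decreases its mean by
   [1 + 2 y (2 p - 1) >= 1], which bounds the expected absorption time. *)
Lemma survival_sum_le M : forall y, (0 <= y <= Z.of_nat K)%Z ->
  sum_f_R0 (fun i => survival_prob p K i y) M <= IZR (Z.of_nat K) ^ 2 - IZR y ^ 2.
Proof.
  induction M as [|M IH]; intros y Hy;
    assert (HyK : 0 <= IZR y <= IZR (Z.of_nat K)) by (split; apply IZR_le; lia).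
  - simpl. rewrite survival_prob_0. unfold interiorb.
    destruct (Z.ltb_spec 0 y), (Z.ltb_spec y (Z.of_nat K)); simpl; try nra.
    assert (1 <= IZR y /\ IZR y + 1 <= IZR (Z.of_nat K)) as [] by
      (rewrite <- plus_IZR; split; apply IZR_le; lia).
    nra.
  - rewrite (sum_f_R0_recursion _ (fun i => survival_prob p K i (y + 1))
      (fun i => survival_prob p K i (y - 1)) (interiorb K y) p (1 - p))
      by (intros; apply survival_prob_S).
    rewrite survival_prob_0. unfold interiorb.
    destruct (Z.ltb_spec 0 y), (Z.ltb_spec y (Z.of_nat K)); simpl; try nra.
    assert (Hup := IH (y + 1)%Z ltac:(lia)). assert (Hdown := IH (y - 1)%Z ltac:(lia)).
    rewrite plus_IZR in Hup. rewrite minus_IZR in Hdown.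
    assert (Hbias : 0 <= IZR y * (2 * p - 1)) by (apply Rmult_le_pos; lra).
    nra.
Qed.

Lemma survival_prob_le M y : (0 <= y <= Z.of_nat K)%Z ->
  survival_prob p K M y <= (IZR (Z.of_nat K) ^ 2 - IZR y ^ 2) / INR (S M).
Proof.
  intros Hy.
  assert (Hdecr : forall i, survival_prob p K (S i) y <= survival_prob p K i y).
  { intros i. assert (H1 := absorption_survival_sum i y Hy).
    assert (H2 := absorption_survival_sum (S i) y Hy). rewrite tech5 in H2.
    assert (H3 := absorption_prob_nonneg (S i) y). lra. }
  assert (Hlin : INR (S M) * survival_prob p K M y <= sum_f_R0 (fun i => survival_prob p K i y) M).
  { clear - Hdecr. induction M as [|M IH]; simpl sum_f_R0; [simpl; lra|].
    rewrite S_INR. specialize (Hdecr M). assert (0 <= INR (S M)) by apply pos_INR. nra. }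
  assert (HS : 0 < INR (S M)) by apply lt_0_INR, Nat.lt_0_succ.
  apply (Rmult_le_reg_l (INR (S M))); [exact HS|].
  replace (INR (S M) * ((IZR (Z.of_nat K) ^ 2 - IZR y ^ 2) / INR (S M)))
    with (IZR (Z.of_nat K) ^ 2 - IZR y ^ 2) by (field; lra).
  assert (Hsum := survival_sum_le M y Hy). lra.
Qed.

Lemma absorption_almost_sure y : (0 <= y <= Z.of_nat K)%Z ->
  infinite_sum (fun n => absorption_prob p K n y) 1.
Proof.
  intros Hy. apply (Un_cv_of_dist_le _ _ (IZR (Z.of_nat K) ^ 2 - IZR y ^ 2)). intros M.
  assert (H1 := absorption_survival_sum M y Hy).
  assert (H2 := survival_prob_le M y Hy).
  replace (sum_f_R0 (fun i => absorption_prob p K i y) M - 1) with (- survival_prob p K M y) by lra.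
  rewrite Rabs_Ropp, Rabs_pos_eq; [exact H2|].
  apply rsum_nonneg; intros s. destruct (survives _ _ _ _); [apply path_weight_nonneg; lra|lra].
Qed.

End Absorption.

(* The largest [k <= N] with [k / N <= t]; [Z.to_nat] sends the negative floors (t < 0) to 0. *)
Definition range_threshold (t : R) (N : nat) : nat :=
  Nat.min N (Z.to_nat (Int_part (t * INR N))).

Lemma Rle_div_iff_le_threshold N r t : (1 <= r <= N)%nat ->
  INR r / INR N <= t <-> (r <= range_threshold t N)%nat.
Proof.
  intros Hr. unfold range_threshold.
  assert (HN : 0 < INR N) by (apply lt_0_INR; lia).
  destruct (base_Int_part (t * INR N)) as [Hfl Hfl'].
  set (z := Int_part (t * INR N)) in *.
  assert (Hdiv : INR r / INR N <= t <-> INR r <= t * INR N).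
  { split; intros H.
    - apply (Rmult_le_compat_r (INR N)) in H; [|lra].
      unfold Rdiv in H. rewrite Rmult_assoc, Rinv_l, Rmult_1_r in H by lra. exact H.
    - apply (Rmult_le_reg_r (INR N)); [exact HN|].
      unfold Rdiv. rewrite Rmult_assoc, Rinv_l, Rmult_1_r by lra. exact H. }
  rewrite Hdiv, INR_IZR_INZ. split; intros H.
  - assert (Hrz : IZR (Z.of_nat r) < IZR (z + 1)) by (rewrite plus_IZR; lra).
    apply lt_IZR in Hrz. lia.
  - assert (Hrz : (Z.of_nat r <= z)%Z) by lia. apply IZR_le in Hrz. lra.
Qed.

(* [(N + 1) * P(R_N <= k, tau_N = n)] for the walk with up-probability [pN] and uniform start. *)
Definition range_le_weight (pN : R) (N k n : nat) : R :=
  rsum (map (fun x : nat => rsum (map (fun s =>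
      if absorbed 0 (Z.of_nat N) (Z.of_nat x) s && (range N (Z.of_nat x) s <=? k)%nat
      then path_weight pN s else 0) (bool_lists n))) (seq 0 (N + 1))).

Lemma cdf_term_range_le_weight p N t n : (1 <= N)%nat ->
  cdf_term p N t n = / INR (N + 1) * range_le_weight (p N) N (range_threshold t N) n.
Proof.
  intros HN. unfold cdf_term, range_le_weight. rewrite <- rsum_map_scal.
  apply rsum_map_ext_in; intros x Hx. apply in_seq in Hx. f_equal.
  apply rsum_map_ext_in; intros s _. rewrite stoppedb_absorbed.
  destruct (absorbed _ _ _ s) eqn:E; simpl; [|ring].
  assert (Hr : (1 <= range N (Z.of_nat x) s <= N)%nat)
    by (split; [apply range_pos; lia|apply absorbed_range_le; auto]).
  destruct (Rle_dec _ t) as [H|H]; rewrite (Rle_div_iff_le_threshold _ _ _ Hr) in H.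
  - rewrite (proj2 (Nat.leb_le _ _) H). ring.
  - rewrite (proj2 (Nat.leb_nle _ _) H). ring.
Qed.

Lemma range_le_weight_0 pN N n : range_le_weight pN N 0 n = 0.
Proof.
  unfold range_le_weight. apply rsum_map_zero; intros x Hx. apply in_seq in Hx.
  apply rsum_map_zero; intros s _.
  assert (Hr := range_pos N x s ltac:(lia)).
  rewrite (proj2 (Nat.leb_nle _ _)) by lia. now rewrite andb_false_r.
Qed.

Lemma range_le_weight_absorption pN N k n : (1 <= k <= N)%nat ->
  range_le_weight pN N k n =
  rsum (map (fun y : nat => absorption_prob pN k n (Z.of_nat y)) (seq 0 (k + 1))).
Proof.
  intros Hk. unfold range_le_weight, absorption_prob.
  rewrite (rsum_swap _ (seq 0 (N + 1))), (rsum_swap _ (seq 0 (k + 1))).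
  apply rsum_map_ext_in; intros s _.
  rewrite (rsum_indicator (fun x : nat => absorbed 0 (Z.of_nat N) (Z.of_nat x) s
                                         && (range N (Z.of_nat x) s <=? k)%nat)),
    (rsum_indicator (fun y : nat => absorbed 0 (Z.of_nat k) (Z.of_nat y) s)).
  now rewrite count_range_le.
Qed.

Lemma infinite_sum_range_le_weight pN N k : / 2 <= pN <= 1 -> (1 <= k <= N)%nat ->
  infinite_sum (range_le_weight pN N k) (INR (k + 1)).
Proof.
  intros Hp Hk.
  apply (infinite_sum_ext (fun n => rsum (map (fun y : nat => absorption_prob pN k n (Z.of_nat y))
                                             (seq 0 (k + 1))))).
  { intros n. symmetry. now apply range_le_weight_absorption. }
  replace (INR (k + 1)) with (rsum (map (fun _ : nat => 1) (seq 0 (k + 1))))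
    by (rewrite rsum_map_const, length_seq; ring).
  apply infinite_sum_rsum. intros y Hy. apply in_seq in Hy.
  apply absorption_almost_sure; [exact Hp|lia].
Qed.

Lemma infinite_sum_cdf_term p N t : / 2 <= p N <= 1 -> (1 <= range_threshold t N)%nat ->
  infinite_sum (cdf_term p N t) (INR (range_threshold t N + 1) / INR (N + 1)).
Proof.
  intros Hp Hk. assert (HkN : (range_threshold t N <= N)%nat) by apply Nat.le_min_l.
  apply (infinite_sum_ext (fun n => / INR (N + 1) * range_le_weight (p N) N (range_threshold t N) n)).
  { intros n. symmetry. apply cdf_term_range_le_weight. lia. }
  unfold Rdiv. rewrite Rmult_comm. apply infinite_sum_scal.
  apply infinite_sum_range_le_weight; [exact Hp|lia].
Qed.

Lemma range_threshold_nonpos t N : t <= 0 -> range_threshold t N = 0%nat.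
Proof.
  intros Ht. unfold range_threshold.
  destruct (base_Int_part (t * INR N)) as [Hfl _].
  assert (Hz : IZR (Int_part (t * INR N)) <= IZR 0).
  { assert (0 <= INR N) by apply pos_INR. nra. }
  apply le_IZR in Hz. lia.
Qed.

Lemma range_threshold_eventually_pos t : 0 < t ->
  exists N1, forall N, (N1 <= N)%nat -> (1 <= range_threshold t N)%nat.
Proof.
  intros Ht. destruct (archimed (/ t)) as [Hup _].
  exists (S (Z.to_nat (up (/ t)))). intros N HN. unfold range_threshold.
  assert (HtN : 1 < t * INR N).
  { assert (H : IZR (up (/ t)) <= INR N) by (rewrite INR_IZR_INZ; apply IZR_le; lia).
    replace 1 with (t * / t) by (field; lra). apply Rmult_lt_compat_l; lra. }
  destruct (base_Int_part (t * INR N)) as [_ Hfl].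
  assert (Hz : IZR 0 < IZR (Int_part (t * INR N))) by lra.
  apply lt_IZR in Hz. lia.
Qed.

Lemma range_threshold_cdf_cv t : 0 < t ->
  Un_cv (fun N => INR (range_threshold t N + 1) / INR (N + 1)) (uniform_cdf t).
Proof.
  intros Ht. apply (Un_cv_of_dist_le _ _ 1). intros N.
  rewrite S_INR, !plus_INR, INR_1.
  assert (HN : 0 <= INR N) by apply pos_INR.
  destruct (base_Int_part (t * INR N)) as [Hfl Hfl'].
  unfold range_threshold, uniform_cdf. set (z := Int_part (t * INR N)) in *.
  destruct (Rle_or_lt 1 t) as [Ht1|Ht1].
  - assert (Hz : IZR (Z.of_nat N - 1) < IZR z) by (rewrite minus_IZR, <- INR_IZR_INZ; nra).
    apply lt_IZR in Hz. rewrite Nat.min_l by lia.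
    rewrite Rmin_right, Rmax_right by lra.
    replace ((INR N + 1) / (INR N + 1) - 1) with 0 by (field; lra).
    rewrite Rabs_R0. apply Rlt_le, Rdiv_lt_0_compat; lra.
  - assert (Hz0 : IZR (-1) < IZR z) by nra. apply lt_IZR in Hz0.
    assert (HzN : IZR z <= IZR (Z.of_nat N)) by (rewrite <- INR_IZR_INZ; nra). apply le_IZR in HzN.
    rewrite Nat.min_r by lia. rewrite Rmin_left, Rmax_right by lra.
    rewrite INR_IZR_INZ, Z2Nat.id by lia.
    replace ((IZR z + 1) / (INR N + 1) - t) with ((IZR z - t * INR N + 1 - t) / (INR N + 1))
      by (field; lra).
    unfold Rdiv. rewrite Rabs_mult, (Rabs_pos_eq (/ _)) by (left; apply Rinv_0_lt_compat; lra).
    apply Rmult_le_compat_r; [left; apply Rinv_0_lt_compat; lra|].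
    apply Rabs_le; lra.
Qed.

Lemma regime_eventually_upward p :
  symmetric_regime p \/ weakly_asymmetric_regime p \/ asymmetric_regime p ->
  exists N0, forall N, (N0 <= N)%nat -> / 2 <= p N <= 1.
Proof.
  intros [Hs|[[c [Hc [N0 HN0]]]|[p0 [Hp0 Hc]]]].
  - exists 0%nat; intros N _; rewrite Hs; lra.
  - destruct (archimed (2 * c)) as [Hup _].
    exists (Nat.max N0 (Z.to_nat (up (2 * c)))). intros N HN.
    rewrite HN0 by lia.
    assert (HcN : 2 * c <= INR N).
    { rewrite INR_IZR_INZ. apply Rlt_le, (Rlt_le_trans _ _ _ Hup), IZR_le. lia. }
    assert (Hpos : 0 < c / INR N) by (apply Rdiv_lt_0_compat; lra).
    assert (Hsmall : c / INR N <= / 2).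
    { apply (Rmult_le_reg_r (INR N)); [lra|].
      unfold Rdiv. rewrite Rmult_assoc, Rinv_l by lra. lra. }
    lra.
  - exists 0%nat; intros N _; rewrite Hc; lra.
Qed.

Theorem proposition2p2 (p : nat -> R)
  (hp : symmetric_regime p \/ weakly_asymmetric_regime p \/ asymmetric_regime p) :
  forall t : R,
    exists F : nat -> R,
      (exists N1 : nat, forall N : nat, (2 <= N)%nat -> (N1 <= N)%nat ->
         infinite_sum (cdf_term p N t) (F N)) /\
      Un_cv F (uniform_cdf t).
Proof.
  intros t. destruct (Rle_or_lt t 0) as [Ht|Ht].
  - exists (fun _ => 0). split.
    + exists 0%nat. intros N HN _.
      apply (infinite_sum_ext (fun _ => 0)); [|exact infinite_sum_zero].
      intros n. rewrite cdf_term_range_le_weight, range_threshold_nonpos, range_le_weight_0 by (lra || lia).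
      ring.
    + unfold uniform_cdf. rewrite Rmin_left, Rmax_left by lra. apply Un_cv_const.
  - destruct (regime_eventually_upward p hp) as [N0 HN0].
    destruct (range_threshold_eventually_pos t Ht) as [N1 HN1].
    exists (fun N => INR (range_threshold t N + 1) / INR (N + 1)).
    split; [|exact (range_threshold_cdf_cv t Ht)].
    exists (Nat.max N0 N1). intros N _ HN.
    apply infinite_sum_cdf_term; [apply HN0|apply HN1]; lia.
Qed.
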